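(* Let $K$ be a compact space such that every separable continuous image of $K$ is metrizable, and such that every continuous image of $K$ has a dense metrizable subspace. Then every ccc continuous image of $K$ is metrizable. In particular, every $\aleph_0$-monolithic fragmentable compact space has all its ccc continuous images metrizable.
   Context: A space is ccc if it has no uncountable family of pairwise disjoint nonempty open sets. A space is $\aleph_0$-monolithic if each of its separable subspaces is metrizable. A compact space $K$ is fragmentable if there is a metric $d$ on $K$ such that every nonempty subset $A\subseteq K$ has, for every $\varepsilon>0$, a nonempty relatively open subset of $d$-diameter less than $\varepsilon$. *)

From HB Require Import structures.
From mathcomp Require Import all_boot all_order all_algebra.
From mathcomp Require Import all_classical all_reals topology.
From mathcomp Require Import Rstruct.
Set Implicit Arguments. Unset Strict Implicit. Unset Printing Implicit Defensive.
Import Order.TTheory GRing.Theory Num.Theory.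
Local Open Scope classical_set_scope.
Local Open Scope ring_scope.
Notation R := Rdefinitions.R.

Definition is_metric_on (T : Type) (A : set T) (d : T -> T -> R) : Prop :=
  (forall x y, A x -> A y -> 0 <= d x y) /\
  (forall x y, A x -> A y -> (d x y = 0 <-> x = y)) /\
  (forall x y, A x -> A y -> d x y = d y x) /\
  (forall x y z, A x -> A y -> A z -> d x z <= d x y + d y z).

(* The subspace A of T is metrizable: some metric on A generates the
   relative topology of A (relatively open sets = traces of open sets). *)
Definition metrizable_on (T : topologicalType) (A : set T) : Prop :=
  exists d : T -> T -> R, is_metric_on A d /\
    forall U : set T, U `<=` A ->
      ((exists V : set T, open V /\ U = V `&` A) <->
       (forall x, U x -> exists2 e : R, 0 < e &
            forall y, A y -> d x y < e -> U y)).

Definition metrizable (T : topologicalType) : Prop := metrizable_on [set: T].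

Definition separable_on (T : topologicalType) (A : set T) : Prop :=
  exists D : set T, D `<=` A /\ countable D /\ A `<=` closure D.

Definition separable (T : topologicalType) : Prop :=
  exists D : set T, countable D /\ dense D.

Definition ccc (T : topologicalType) : Prop :=
  forall F : set (set T),
    (forall U, F U -> open U /\ U !=set0) ->
    (forall U V, F U -> F V -> U <> V -> U `&` V = set0) ->
    countable F.

Definition aleph0_monolithic (T : topologicalType) : Prop :=
  forall A : set T, separable_on A -> metrizable_on A.

(* Compact space (Hausdorff convention of the paper). *)
Definition compact_space (T : topologicalType) : Prop :=
  hausdorff_space T /\ compact [set: T].

(* L is a continuous image of K (images are Hausdorff spaces, as all spaces
   in the paper are). *)
Definition continuous_image (K L : topologicalType) : Prop :=
  hausdorff_space L /\
  exists f : K -> L, continuous f /\ (forall y, exists x, f x = y).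

(* Fragmentable: some metric d on K (not necessarily related to the topology)
   such that every nonempty subset has, for every e > 0, a nonempty relatively
   open subset of d-diameter less than e. *)
Definition fragmentable (K : topologicalType) : Prop :=
  exists d : K -> K -> R, is_metric_on [set: K] d /\
    forall (A : set K), A !=set0 -> forall e : R, 0 < e ->
      exists W : set K, open W /\ (W `&` A) !=set0 /\
        exists2 r : R, r < e &
          forall x y, (W `&` A) x -> (W `&` A) y -> d x y <= r.

(* A ccc space with a dense metrizable subspace D is separable: for each n, a
   maximal family of pairwise disjoint open sets whose traces on D have diameter
   < 1/(n+1) is countable by ccc, and the traces of all these families form a
   countable pi-network.

   For the second, let L = f(K) be a ccc image. A countable lift of a dense subset of
   a separable image has a closure M that is separable, hence metrizable by
   aleph_0-monolithicity; the images of the closed balls of M with radii 1/(m+1)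
   around a countable dense set form a countable closed network of L, and Urysohn
   functions for the disjoint pairs of this network form a point-separating sequence
   into [0,1], whose weighted sup-distance metrizes the compact space L. So it
   suffices that L is separable. Restrict f to a closed K' on which it is
   irreducible: every open W meeting K' contains a whole fibre. Fragmentability then
   yields successive maximal families of disjoint open sets of L, each member having
   its closure inside a member of the previous family and fibres over that closure of
   d-diameter at most 1/(n+1); these families are countable by ccc. Given a nonempty
   open O, a branch of members meeting a regular shrinking of O has, by compactness,
   a nonempty intersection, which is a single point because d separates points;
   hence the branch eventually lies in O. *)

From HB Require Import structures.
From mathcomp Require Import all_boot all_order all_algebra.
From mathcomp Require Import all_classical all_reals topology normedtype.
From mathcomp Require Import interval_inference Rstruct Rstruct_topology lra.
Set Implicit Arguments. Unset Strict Implicit. Unset Printing Implicit Defensive.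
Import Order.TTheory GRing.Theory Num.Theory.
Local Open Scope classical_set_scope.
Local Open Scope ring_scope.

Lemma dependent_choice_seq (T : Type) (P : nat -> T -> Prop)
    (Rel : nat -> T -> T -> Prop) (x0 : T) :
  P 0%N x0 -> (forall n x, P n x -> exists2 y, P n.+1 y & Rel n x y) ->
  exists s : nat -> T, s 0%N = x0 /\ forall n, P n (s n) /\ Rel n (s n) (s n.+1).
Proof.
move=> P0 step.
have /choice[next nextP] : forall p : nat * T, exists y,
    P p.1 p.2 -> P p.1.+1 y /\ Rel p.1 p.2 y.
  move=> [n x]; have [Pnx|nPnx] := pselect (P n x); last by exists x.
  by have [y Py Ry] := step n x Pnx; exists y.
pose s := fix s n := if n is m.+1 then next (m, s m) else x0.
have Ps n : P n (s n) by elim: n => // n IH; have [] := nextP (n, s n) IH.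
by exists s; split => // n; split => //; have [] := nextP (n, s n) (Ps n).
Qed.

Lemma countable_sub_range (T : Type) (A : set T) (t0 : T) :
  countable A -> exists e : nat -> T, A `<=` range e.
Proof.
move=> /countable_injP[h hinj].
have /choice[e eP] : forall n, exists x, (exists2 y, A y & h y = n) ->
    A x /\ h x = n.
  move=> n; have [[y Ay hy]|nh] := pselect (exists2 y, A y & h y = n).
    by exists y.
  by exists t0.
exists e => x Ax; exists (h x) => //.
have [Aex hex] := eP (h x) (ex_intro2 _ _ x Ax erefl).
by apply: hinj; rewrite ?inE.
Qed.

Lemma compact_chain_bigcap_neq0 (T : topologicalType) (F : set (set T)) :
  compact [set: T] -> F !=set0 -> (forall X, F X -> closed X /\ X !=set0) ->
  total_on F subset -> \bigcap_(X in F) X !=set0.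
Proof.
move=> cT [X0 FX0] FP tot.
have FF : Filter (filter_from F id).
  apply: filter_from_filter; first by exists X0.
  move=> X Y FX FY; have [XY|YX] := tot _ _ FX FY.
  - by exists X => // x Xx; split => //; exact: XY.
  - by exists Y => // y Yy; split => //; exact: YX.
have PF : ProperFilter (filter_from F id).
  by apply: filter_from_proper => X /FP[].
have [x [_ clx]] := cT _ PF filterT.
exists x => X FX; rewrite clusterE in clx.
by rewrite ((closure_id X).1 (FP X FX).1); apply: clx; exists X.
Qed.

Lemma decreasing_closed_bigcap_neq0 (T : topologicalType) (C : nat -> set T) :
  compact [set: T] -> (forall n, closed (C n)) -> (forall n, C n.+1 `<=` C n) ->
  (forall n, C n !=set0) -> \bigcap_n C n !=set0.
Proof.
move=> cT closedC decrC C0.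
have le_C m n : (m <= n)%N -> C n `<=` C m.
  move=> /subnK <-; elim: (n - m)%N => // k IH.
  by rewrite addSn; apply: subset_trans (decrC _) IH.
have [x Cx] : \bigcap_(X in range C) X !=set0.
  apply: compact_chain_bigcap_neq0 => //; first by exists (C 0%N), 0%N.
    by move=> _ [n _ <-].
  move=> _ _ [m _ <-] [n _ <-].
  by have [/le_C|/ltnW/le_C] := leqP m n; [right|left].
by exists x => n _; apply: Cx; exists n.
Qed.

Lemma decreasing_closed_subset_open (T : topologicalType) (C : nat -> set T)
    (N : set T) :
  compact [set: T] -> (forall n, closed (C n)) -> (forall n, C n.+1 `<=` C n) ->
  open N -> \bigcap_n C n `<=` N -> exists n, C n `<=` N.
Proof.
move=> cT closedC decrC oN CN; apply: contrapT => nCN.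
have [x CNx] : \bigcap_n (C n `&` ~` N) !=set0.
  apply: decreasing_closed_bigcap_neq0 => //.
  - by move=> n; apply: closedI => //; exact: open_closedC.
  - by move=> n x [Cx Nx]; split => //; exact: decrC.
  move=> n; apply: contrapT => /set0P/negP; rewrite negbK => /eqP CN0.
  apply: nCN; exists n => x Cx; apply: contrapT => Nx.
  by rewrite -[False]/(set0 x) -CN0.
have [_ nNx] := CNx 0%N I; apply/nNx/CN => n _.
by have [] := CNx n I.
Qed.

Lemma continuous_onto_compact (K L : topologicalType) (f : K -> L) :
  compact [set: K] -> continuous f -> (forall y, exists x, f x = y) ->
  compact [set: L].
Proof.
move=> cK cf onto; have -> : [set: L] = f @` [set: K].
  by apply/seteqP; split => // y _; have [x fx] := onto y; exists x.
by apply: continuous_compact => //; exact: continuous_subspaceT.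
Qed.

Lemma closed_image_closed (K L : topologicalType) (f : K -> L) (S : set K) :
  compact [set: K] -> hausdorff_space L -> continuous f -> closed S ->
  closed (f @` S).
Proof.
move=> cK hL cf cS; apply: compact_closed => //.
apply: continuous_compact; first exact: continuous_subspaceT.
exact: subclosed_compact cS cK (@subsetT _ S).
Qed.

Lemma compact_closure_subset_open (T : topologicalType) (U : set T) (y : T) :
  hausdorff_space T -> compact [set: T] -> open U -> U y ->
  exists V, [/\ open V, V y & closure V `<=` U].
Proof.
move=> hT cT oU Uy.
have [B By cBU] :=
  @compact_regular T y setT hT cT filterT U (open_nbhs_nbhs (conj oU Uy)).
exists (interior B); split => //; first exact: open_interior.
exact: subset_trans (closureS (@interior_subset _ B)) cBU.
Qed.

Definition dense_cellular (T : topologicalType) (G : set (set T)) :=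
  [/\ forall V, G V -> open V /\ V !=set0, trivIset G id &
      dense (\bigcup_(V in G) V)].

Lemma exists_dense_cellular (T : topologicalType) (P : set T -> Prop) :
  (forall U, open U -> U !=set0 ->
     exists2 V, V `<=` U & [/\ open V, V !=set0 & P V]) ->
  exists2 G, dense_cellular G & forall V, G V -> P V.
Proof.
move=> refP.
pose cellular G := (forall V, G V -> [/\ open V, V !=set0 & P V]) /\ trivIset G id.
have [G [[GP Gtriv] Gmax]] : exists G, cellular G /\ forall H, G `<` H -> ~ cellular H.
  apply: Zorn_bigcup => F Fcell Ftot; split.
    by move=> V [X FX XV]; exact: (Fcell X FX).1.
  move=> V W [X FX XV] [Y FY YW].
  have [XY|YX] := Ftot _ _ FX FY.
  - by apply: (Fcell Y FY).2 => //; exact: XY.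
  - by apply: (Fcell X FX).2 => //; exact: YX.
exists G; last by move=> V /GP[].
split => //; first by move=> V /GP[].
move=> O O0 oO; apply: contrapT => /set0P/negP; rewrite negbK => /eqP OG0.
have [V VO [oV V0 PV]] := refP O oO O0.
have VG W : G W -> V `&` W = set0.
  move=> GW; apply/seteqP; split => // x [Vx Wx].
  by rewrite -OG0; split; [exact: VO | exists W].
apply: (Gmax (V |` G)).
  split; first by move=> W GW; right.
  move=> /(_ V (or_introl erefl)) GV; have [x Vx] := V0.
  by have /seteqP[/(_ x (conj Vx Vx))] := VG V GV.
split; first by move=> W [->|/GP].
move=> W1 W2 [->|GW1] [->|GW2] //; last exact: Gtriv.
- by rewrite VG // => -[].
- by rewrite setIC VG // => -[].
Qed.

Lemma ccc_cellular_countable (T : topologicalType) (G : set (set T)) :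
  ccc T -> (forall V, G V -> open V /\ V !=set0) -> trivIset G id -> countable G.
Proof.
move=> cT GP Gtriv; apply: cT => // V W GV GW VW.
by apply/seteqP; split => // x VWx; apply: VW; apply: Gtriv => //; exists x.
Qed.

Lemma separable_of_countable_pi_network (T : topologicalType) (N : set (set T)) :
  countable N -> (forall W, N W -> W !=set0) ->
  (forall O, open O -> O !=set0 -> exists2 W, N W & W `<=` O) -> separable T.
Proof.
move=> cN N0 piN.
have [[t0 _]|T0] := pselect (exists t : T, True); last first.
  by exists set0; split => // O [t _]; case: T0; exists t.
have /choice[pt ptP] : forall W : set T, exists t, N W -> W t.
  move=> W; have [/N0[t Wt]|nW] := pselect (N W); first by exists t.
  by exists t0.
exists (pt @` N); split; first exact: sub_countable (card_image_le _ _) cN.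
move=> O O0 oO; have [W NW WO] := piN O oO O0.
by exists (pt W); split; [exact: WO (ptP W NW) | exists W].
Qed.

Definition small_image (K L : Type) (f : K -> L) (K' W : set K) : set L :=
  [set y | forall x, K' x -> f x = y -> W x].

Lemma small_image_open (K L : topologicalType) (f : K -> L) (K' W : set K) :
  compact [set: K] -> hausdorff_space L -> continuous f -> closed K' -> open W ->
  open (small_image f K' W).
Proof.
move=> cK hL cf cK' oW.
have -> : small_image f K' W = ~` (f @` (K' `&` ~` W)).
  apply/seteqP; split => [y Wy [x [K'x nWx] fx]|y nWy x K'x fx].
    exact/nWx/Wy.
  by apply: contrapT => nWx; apply: nWy; exists x.
apply: closed_openC; apply: closed_image_closed => //.
by apply: closedI => //; exact: open_closedC.
Qed.

Lemma irreducible_restriction (K L : topologicalType) (f : K -> L) :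
  compact [set: K] -> hausdorff_space L -> continuous f ->
  (forall y, exists x, f x = y) ->
  exists K' : set K, [/\ closed K', (forall y, exists2 x, K' x & f x = y) &
    forall W, open W -> (W `&` K') !=set0 -> small_image f K' W !=set0].
Proof.
move=> cK hL cf onto.
pose onto_outside (A : set K) := open A /\ forall y, exists2 x, ~ A x & f x = y.
have [A [[oA Aonto] Amax]] :
    exists A, onto_outside A /\ forall B, A `<` B -> ~ onto_outside B.
  apply: Zorn_bigcup => G GP Gtot; split; first by apply: bigcup_open => X /GP[].
  move=> y; have [x0 fx0] := onto y.
  have cfy : closed (f @^-1` [set y]).
    apply: preimage_closed; first by move=> ? _; exact: cf.
    exact/accessible_closed_set1/hausdorff_accessible.
  have [x Fx] : \bigcap_(Z in [set ~` X `&` f @^-1` [set y] | X in set0 |` G]) Z !=set0.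
    apply: compact_chain_bigcap_neq0 => //.
    - by exists (~` set0 `&` f @^-1` [set y]), set0; [left|].
    - move=> _ [X GX <-]; split.
        apply: closedI => //; apply: open_closedC.
        by case: GX => [->|/GP[]//]; exact: open0.
      case: GX => [->|/GP[_ /(_ y)[x nXx fx]]]; last by exists x.
      by exists x0; split => // -[].
    - move=> _ _ [X GX <-] [Y GY <-].
      have [XY|YX] : X `<=` Y \/ Y `<=` X.
        by case: GX GY => [->|GX] [->|GY]; [left|left|right|exact: Gtot].
      + by right => x [nYx fx]; split => // /XY.
      + by left => x [nXx fx]; split => // /YX.
  exists x; last by have [] := Fx _ (ex_intro2 _ _ set0 (or_introl erefl) erefl).
  by move=> [X GX Xx]; have [] := Fx _ (ex_intro2 _ _ X (or_intror GX) erefl).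
exists (~` A); split; first exact: open_closedC.
  by move=> y; have [x nAx fx] := Aonto y; exists x.
move=> W oW [w [Ww nAw]]; apply: contrapT => /set0P/negP; rewrite negbK => /eqP W0.
apply: (Amax (A `|` W)).
  split; first by move=> x Ax; left.
  by move=> /(_ w (or_intror Ww)).
split; first exact: openU.
move=> y; have : ~ small_image f (~` A) W y by rewrite W0.
move=> /existsNP[x /not_implyP[nAx /not_implyP[fx nWx]]].
by exists x => // -[].
Qed.

Lemma exists_invS_lt (e : R) : 0 < e -> exists n : nat, n.+1%:R^-1 < e.
Proof.
move=> e0; have [N _ HN] := near_infty_natSinv_lt (PosNum e0).
by exists N; apply: HN => /=.
Qed.

Lemma eq0_le_invS (a : R) : 0 <= a -> (forall n : nat, a <= n.+1%:R^-1) -> a = 0.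
Proof.
move=> a0 aS; apply/eqP; rewrite eq_le a0 andbT leNgt; apply/negP => /exists_invS_lt[n].
by rewrite ltNge aS.
Qed.

Definition metric_topology_on (T : topologicalType) (A : set T) (d : T -> T -> R) :=
  forall U : set T, U `<=` A ->
    ((exists V : set T, open V /\ U = V `&` A) <->
     (forall x, U x -> exists2 e : R, 0 < e & forall y, A y -> d x y < e -> U y)).

Section MetricSubspace.
Variables (T : topologicalType) (A : set T) (d : T -> T -> R).
Hypotheses (dA : is_metric_on A d) (tA : metric_topology_on A d).

Lemma metric_ball_open (z : T) (r : R) : A z ->
  exists V, open V /\ [set x | A x /\ d z x < r] = V `&` A.
Proof.
have [_ [_ [_ dT]]] := dA; move=> Az.
apply/(tA (fun x => @proj1 _ _)) => x [Ax dzx].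
exists (r - d z x); first by rewrite subr_gt0.
move=> y Ay dxy; split => //.
by move: (dT z x y Az Ax Ay) dxy; rewrite ltrBrDl; exact: le_lt_trans.
Qed.

Lemma open_metric_ball (V : set T) (x : T) : open V -> V x -> A x ->
  exists2 e : R, 0 < e & forall y, A y -> d x y < e -> V y.
Proof.
move=> oV Vx Ax.
have [|e e0 eV] := (tA (fun _ => @proj2 _ _)).1 (ex_intro _ V (conj oV erefl)) x.
  by split.
by exists e => // y Ay dxy; have [] := eV y Ay dxy.
Qed.

Lemma open_nbhs_small_trace (z : T) (r : R) : A z -> 0 < r ->
  exists V, [/\ open V, V z &
    forall x y, V x -> V y -> A x -> A y -> d x y < r].
Proof.
have [d0 [dE [dC dT]]] := dA; move=> Az r0.
have [V [oV VE]] := metric_ball_open (r / 2) Az.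
have ballV x : V x -> A x -> d z x < r / 2.
  by move=> Vx Ax; have : (V `&` A) x by []; rewrite -VE => -[].
exists V; split => //.
  have : [set x | A x /\ d z x < r / 2] z.
    by split => //; rewrite (dE z z Az Az).2 // divr_gt0.
  by rewrite VE => -[].
move=> x y Vx Vy Ax Ay; apply: le_lt_trans (dT x z y Ax Az Ay) _.
by rewrite (dC x z Ax Az) [X in _ < X](splitr r); apply: ltrD; exact: ballV.
Qed.

Lemma closed_metric_closed_ball (z : T) (r : R) : closed A -> A z ->
  closed (A `&` [set x | d z x <= r]).
Proof.
have [_ [_ [dC dT]]] := dA; move=> cA Az.
have [V [oV VE]] : exists V, open V /\ [set x | A x /\ r < d z x] = V `&` A.
  apply/(tA (fun x => @proj1 _ _)) => x [Ax rx].
  exists (d z x - r); first by rewrite subr_gt0.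
  move=> y Ay dxy; split => //.
  by have := dT z y x Az Ay Ax; rewrite (dC y x Ay Ax); lra.
have -> : A `&` [set x | d z x <= r] = A `&` ~` V.
  apply/seteqP; split => x [Ax dx]; split => //.
    move=> Vx; have : (V `&` A) x by [].
    by rewrite -VE => -[_]; rewrite ltNge dx.
  rewrite /= leNgt; apply/negP => rx; apply: dx.
  by have : [set x | A x /\ r < d z x] x by []; rewrite VE => -[].
by apply: closedI => //; exact: open_closedC.
Qed.

End MetricSubspace.

Lemma ccc_dense_metrizable_separable (L : topologicalType) (D : set L) :
  ccc L -> dense D -> metrizable_on D -> separable L.
Proof.
move=> cL dD [d [dD_metric tD]]; have [_ [_ [_ dT]]] := dD_metric.
pose small (r : R) (V : set L) :=
  forall x y, V x -> V y -> D x -> D y -> d x y < r.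
have refine_small n U : open U -> U !=set0 ->
    exists2 V, V `<=` U & [/\ open V, V !=set0 & small n.+1%:R^-1 V].
  move=> oU U0; have [z [Uz Dz]] := dD U U0 oU.
  have n0 : 0 < n.+1%:R^-1 :> R by rewrite invr_gt0 ltr0n.
  have [V [oV Vz Vsmall]] := open_nbhs_small_trace dD_metric tD Dz n0.
  exists (V `&` U); first by move=> x [].
  split; [exact: openI | by exists z | by move=> x y [Vx _] [Vy _]; exact: Vsmall].
have /choice[F FP] n :
    exists F, dense_cellular F /\ forall V, F V -> small n.+1%:R^-1 V.
  by have [F ? ?] := exists_dense_cellular (refine_small n); exists F.
apply: (@separable_of_countable_pi_network _
  (\bigcup_n [set V `&` D | V in F n])).
- apply: bigcup_countable => // n _; apply: sub_countable (card_image_le _ _) _.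
  by have [[? ? _] _] := FP n; exact: ccc_cellular_countable.
- move=> _ [n _ [V FV <-]]; have [[FO _ _] _] := FP n.
  by have [oV V0] := FO V FV; have := dD V V0 oV.
move=> O oO O0; have [z [Oz Dz]] := dD O O0 oO.
have [e e0 eO] := open_metric_ball tD oO Oz Dz.
have e20 : 0 < e / 2 by rewrite divr_gt0.
have [n ne] := exists_invS_lt e20.
have [V' [oV' V'z V'small]] := open_nbhs_small_trace dD_metric tD Dz e20.
have [[FO _ Fdense] Fsmall] := FP n.
have [w [V'w [V FV Vw]]] := Fdense V' (ex_intro _ z V'z) oV'.
have [w' [[V'w' Vw'] Dw']] :=
  dD (V' `&` V) (ex_intro _ w (conj V'w Vw)) (openI oV' (FO V FV).1).
exists (V `&` D); first by exists n => //; exists V.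
move=> u [Vu Du]; apply: eO => //.
apply: le_lt_trans (dT z w' u Dz Dw' Du) _; rewrite [X in _ < X](splitr e).
apply: ltrD; first exact: V'small.
exact: lt_trans (Fsmall V FV w' u Vw' Vu Dw' Du) ne.
Qed.

Section FragmentedIrreducibleImage.
Variables (K L : topologicalType) (f : K -> L) (K' : set K) (d : K -> K -> R).
Hypotheses (cK : compact [set: K]) (hL : hausdorff_space L) (cf : continuous f)
  (closedK' : closed K') (K'_onto : forall y, exists2 x, K' x & f x = y)
  (K'_irr : forall W, open W -> (W `&` K') !=set0 -> small_image f K' W !=set0)
  (d_ge0 : forall x y, 0 <= d x y) (d_sep : forall x y, d x y = 0 -> x = y)
  (d_frag : forall A : set K, A !=set0 -> forall e : R, 0 < e ->
     exists W : set K, open W /\ (W `&` A) !=set0 /\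
       exists2 r : R, r < e &
         forall x y, (W `&` A) x -> (W `&` A) y -> d x y <= r).

Let cL : compact [set: L].
Proof.
by apply: (continuous_onto_compact cK cf) => y; have [x _ fx] := K'_onto y; exists x.
Qed.

Definition fine_refinement (n : nat) (G : set (set L)) (V : set L) :=
  (exists2 V', G V' & closure V `<=` V') /\
  forall x x', K' x -> K' x' -> closure V (f x) -> closure V (f x') ->
    d x x' <= n.+1%:R^-1.

Lemma fine_refinement_exists n G : (forall V, G V -> open V) ->
  dense (\bigcup_(V in G) V) -> forall U, open U -> U !=set0 ->
  exists2 V, V `<=` U & [/\ open V, V !=set0 & fine_refinement n G V].
Proof.
move=> oG dG U oU U0; have [y1 [Uy1 [V' GV' V'y1]]] := dG U U0 oU.
pose A := K' `&` f @^-1` (U `&` V').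
have A0 : A !=set0.
  by have [x K'x fx] := K'_onto y1; exists x; split => //; rewrite /= fx.
have n0 : 0 < n.+1%:R^-1 :> R by rewrite invr_gt0 ltr0n.
have [W [oW [WA0 [r rn Wsmall]]]] := d_frag A0 n0.
pose W' := W `&` f @^-1` (U `&` V').
have oW' : open W'.
  apply: openI => //; apply: open_comp; first by move=> ? _; exact: cf.
  exact: openI (oG _ GV').
have [y2 Sy2] : small_image f K' W' !=set0.
  by apply: K'_irr => //; have [x [Wx [K'x fx]]] := WA0; exists x.
have [V [oV Vy2 VS]] := compact_closure_subset_open hL cL
  (small_image_open cK hL cf closedK' oW') Sy2.
have S_UV' y : small_image f K' W' y -> U y /\ V' y.
  move=> Sy; have [x K'x fx] := K'_onto y.
  by have [_ [Ux V'x]] := Sy x K'x fx; rewrite -fx.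
exists V; first by move=> y /subset_closure/VS/S_UV'[].
split => //; first by exists y2.
split; first by exists V' => // y /VS/S_UV'[].
move=> x x' K'x K'x' Vx Vx'.
have [Wx UV'x] := VS _ Vx x K'x erefl.
have [Wx' UV'x'] := VS _ Vx' x' K'x' erefl.
by apply: le_trans (ltW rn); apply: Wsmall.
Qed.

Lemma fine_cellular_sequence : exists fam : nat -> set (set L),
  forall n, dense_cellular (fam n) /\
    forall V, fam n.+1 V -> fine_refinement n (fam n) V.
Proof.
have [G0 G0cell _] : exists2 G0 : set (set L), dense_cellular G0 & G0 `<=` setT.
  by apply: exists_dense_cellular => U oU U0; exists U.
have step n G : dense_cellular G -> exists2 F, dense_cellular F &
    forall V, F V -> fine_refinement n G V.
  move=> [GO _ Gdense]; apply: exists_dense_cellular.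
  exact: fine_refinement_exists (fun V GV => (GO V GV).1) Gdense.
have [fam [_ famP]] := @dependent_choice_seq _ (fun _ => @dense_cellular L)
  (fun n G F => forall V, F V -> fine_refinement n G V) G0 G0cell step.
by exists fam.
Qed.

Section Branch.
Variable fam : nat -> set (set L).
Hypothesis famP : forall n, dense_cellular (fam n) /\
  forall V, fam n.+1 V -> fine_refinement n (fam n) V.

Lemma fine_cellular_branch (O : set L) : open O -> O !=set0 ->
  exists br : nat -> set L, forall n,
    (fam n (br n) /\ (br n `&` O) !=set0) /\ closure (br n.+1) `<=` br n.
Proof.
move=> oO O0; have [[_ _ dense0] _] := famP 0%N.
have [y [Oy [V0 fam0V0 V0y]]] := dense0 O O0 oO.
have step n V : fam n V /\ (V `&` O) !=set0 ->
    exists2 W, fam n.+1 W /\ (W `&` O) !=set0 & closure W `<=` V.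
  move=> [famV VO]; have [[famO triv _] fine] := famP n.
  have [[_ _ dense1] _] := famP n.+1.
  have [w [[Vw Ow] [W famW Ww]]] :=
    dense1 (V `&` O) VO (openI (famO V famV).1 oO).
  exists W; first by split => //; exists w.
  have [[V' famV' WV'] _] := fine W famW.
  rewrite (triv V V' famV famV') //.
  by exists w; split => //; exact/WV'/subset_closure.
have [br [_ brP]] := @dependent_choice_seq _
  (fun n V => fam n V /\ (V `&` O) !=set0)
  (fun _ V W => closure W `<=` V) V0 (conj fam0V0 (ex_intro _ y (conj V0y Oy))) step.
by exists br.
Qed.

Lemma fine_cellular_pi_network (O : set L) : open O -> O !=set0 ->
  exists2 V, (\bigcup_n fam n) V & V `<=` O.
Proof.
move=> oO [y Oy].
have [O' [oO' O'y O'O]] := compact_closure_subset_open hL cL oO Oy.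
have [br brP] := fine_cellular_branch oO' (ex_intro _ y O'y).
pose C n := closure (br n.+1).
have closedC n : closed (C n) by exact: closed_closure.
have decrC n : C n.+1 `<=` C n by move=> z /(brP n.+1).2; exact: subset_closure.
have [z Cz] : \bigcap_n C n !=set0.
  apply: decreasing_closed_bigcap_neq0 => // n.
  by have [[_ [u [bu _]]] _] := brP n.+1; exists u; exact: subset_closure.
have Cz_uniq z' : (\bigcap_n C n) z' -> z' = z.
  move=> Cz'; have [x K'x fx] := K'_onto z; have [x' K'x' fx'] := K'_onto z'.
  rewrite -fx -fx'; congr f; apply: d_sep; apply: eq0_le_invS => // n.
  have [_ fine] := famP n; have [_ diam] := fine _ (brP n.+1).1.1.
  by apply: diam; rewrite // ?fx ?fx'; [exact: Cz' | exact: Cz].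
have C_shrink N : open N -> N z -> exists n, C n `<=` N.
  by move=> oN Nz; apply: decreasing_closed_subset_open => // z' /Cz_uniq ->.
have Oz : O z.
  apply: O'O => B Bz; have [n CB] := C_shrink _ (@open_interior _ B) Bz.
  have [[_ [w [bw O'w]]] _] := brP n.+1.
  exists w; split => //; apply: (@interior_subset _ B); apply: CB.
  exact: subset_closure.
have [n CO] := C_shrink O oO Oz.
exists (br n.+1); first by exists n.+1 => //; exact: (brP n.+1).1.1.
by move=> u /subset_closure/CO.
Qed.

End Branch.

Lemma fragmented_ccc_image_separable : ccc L -> separable L.
Proof.
move=> cccL; have [fam famP] := fine_cellular_sequence.
apply: (@separable_of_countable_pi_network _ (\bigcup_n fam n)).
- apply: bigcup_countable => // n _; have [[famO triv _] _] := famP n.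
  exact: ccc_cellular_countable.
- by move=> V [n _ famV]; have [[famO _ _] _] := famP n; have [] := famO V famV.
- exact: fine_cellular_pi_network.
Qed.

End FragmentedIrreducibleImage.

Lemma fragmentable_ccc_image_separable (K L : topologicalType) :
  compact_space K -> fragmentable K -> continuous_image K L -> ccc L ->
  separable L.
Proof.
move=> [_ cK] [d [[d_ge0 [d_eq _]] d_frag]] [hL [f [cf onto]]] cccL.
have [K' [closedK' K'_onto K'_irr]] := irreducible_restriction cK hL cf onto.
apply: (fragmented_ccc_image_separable cK hL cf closedK' K'_onto K'_irr _ _ d_frag cccL).
- by move=> x y; exact: d_ge0.
- by move=> x y /(d_eq x y I I).1.
Qed.

Section SeparatingSequence.
Variables (L : topologicalType) (g : nat -> L -> R).
Hypotheses (cL : compact [set: L]) (g_cont : forall k, continuous (g k))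
  (g01 : forall k y, 0 <= g k y <= 1)
  (g_sep : forall y z, y <> z -> exists k, g k y != g k z).

Let weighted_gap y z k := `|g k y - g k z| / k.+1%:R.

Let gap_le1 k y z : `|g k y - g k z| <= 1.
Proof.
have /andP[? ?] := g01 k y; have /andP[? ?] := g01 k z.
by rewrite ler_norml; apply/andP; split; lra.
Qed.

Let weighted_gap_le k y z : weighted_gap y z k <= `|g k y - g k z|.
Proof. by rewrite ler_pdivrMr ?ltr0n // ler_peMr // ler1n. Qed.

Definition weighted_sup_dist y z := sup (range (weighted_gap y z)).

Let le_weighted_sup_dist y z k : weighted_gap y z k <= weighted_sup_dist y z.
Proof.
apply: sup_upper_bound; last by exists k.
split; first by exists (weighted_gap y z 0%N), 0%N.
by exists 1 => _ [j _ <-]; exact: le_trans (weighted_gap_le _ _ _) (gap_le1 _ _ _).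
Qed.

Let weighted_sup_dist_le y z b :
  (forall k, weighted_gap y z k <= b) -> weighted_sup_dist y z <= b.
Proof.
by move=> gapb; apply: ge_sup; [exists (weighted_gap y z 0%N), 0%N | move=> _ [k _ <-]].
Qed.

Lemma weighted_sup_dist_metric : is_metric_on [set: L] weighted_sup_dist.
Proof.
have d0 y z : 0 <= weighted_sup_dist y z.
  by apply: le_trans (le_weighted_sup_dist y z 0%N); rewrite divr_ge0.
split; first by move=> y z _ _; exact: d0.
split.
  move=> y z _ _; split => [dyz|->]; last first.
    apply/eqP; rewrite eq_le d0 andbT; apply: weighted_sup_dist_le => k.
    by rewrite /weighted_gap subrr normr0 mul0r.
  apply: contrapT => /g_sep[k gyz].
  have := le_weighted_sup_dist y z k; rewrite dyz leNgt => /negP; apply.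
  by rewrite divr_gt0 // normr_gt0 subr_eq0.
split.
  move=> y z _ _; apply/eqP; rewrite eq_le.
  by apply/andP; split; apply: weighted_sup_dist_le => k;
    rewrite /weighted_gap distrC; exact: le_weighted_sup_dist.
move=> x y z _ _ _; apply: weighted_sup_dist_le => k.
apply: le_trans (lerD (le_weighted_sup_dist x y k) (le_weighted_sup_dist y z k)).
by rewrite /weighted_gap -mulrDl ler_wpM2r ?invr_ge0 // ler_distD.
Qed.

Lemma open_weighted_sup_dist_ball (V : set L) (y : L) : open V -> V y ->
  exists2 e : R, 0 < e & forall z, weighted_sup_dist y z < e -> V z.
Proof.
move=> oV Vy; pose near_y N := [set z | forall k, (k <= N)%N ->
  `|g k y - g k z| <= N.+1%:R^-1].
have closed_near_y N : closed (~` V `&` near_y N).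
  apply: closedI; first exact: open_closedC.
  have -> : near_y N = \bigcap_(k in [set k | (k <= N)%N])
      (g k @^-1` closed_ball (g k y) N.+1%:R^-1).
    by apply/seteqP; split => z /= gap k /gap;
      rewrite /preimage /= (@closed_ballE _ R^o) ?invr_gt0.
  apply: closed_bigI => k _; apply: preimage_closed; first by move=> ? _.
  exact: closed_ball_closed.
have decr_near_y N : ~` V `&` near_y N.+1 `<=` ~` V `&` near_y N.
  move=> z [nVz gap]; split => // k kN; apply: le_trans (gap k (leqW kN)) _.
  by rewrite lef_pV2 ?posrE // ler_nat.
have [N nearN0] : exists N, ~` V `&` near_y N `<=` set0.
  apply: decreasing_closed_subset_open => //; first exact: open0.
  move=> z nearz; have yz : y <> z by move=> yz; have [] := nearz 0%N I; rewrite -yz.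
  have [k gyz] := g_sep yz; suff : `|g k y - g k z| = 0.
    by move/eqP; rewrite normr_eq0 subr_eq0 (negbTE gyz).
  apply: eq0_le_invS => // n; have [_ gap] := nearz (maxn n k) I.
  apply: le_trans (gap k (leq_maxr n k)) _.
  by rewrite lef_pV2 ?posrE // ler_nat ltnS leq_maxl.
exists (N.+1%:R^-1 / N.+1%:R); first by rewrite divr_gt0 ?invr_gt0.
move=> z dz; apply: contrapT => nVz.
have [k kN gapk] : exists2 k, (k <= N)%N & N.+1%:R^-1 < `|g k y - g k z|.
  apply: contrapT => nk; apply: (nearN0 z); split => // k kN.
  by rewrite leNgt; apply/negP => gapk; apply: nk; exists k.
move: dz; apply/negP; rewrite -leNgt.
apply: le_trans (le_weighted_sup_dist y z k); rewrite /weighted_gap.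
apply: le_trans (_ : `|g k y - g k z| / N.+1%:R <= _).
  by rewrite ler_pM2r ?invr_gt0 ?ltr0n // ltW.
by rewrite ler_wpM2l // lef_pV2 ?posrE // ler_nat.
Qed.

Lemma weighted_sup_dist_ball_open (U : set L) :
  (forall y, U y -> exists2 e : R, 0 < e &
     forall z, weighted_sup_dist y z < e -> U z) -> open U.
Proof.
move=> Uball; rewrite openE => y Uy; have [e e0 eU] := Uball y Uy.
have e20 : 0 < e / 2 by rewrite divr_gt0.
have [N Ne] := exists_invS_lt e20.
have near_gap k : \forall z \near y, `|g k y - g k z| < e / 2.
  exact: (@cvgr_dist_lt _ R^o _ (nbhs y) _ (g k) (g k y) (@g_cont k y) _ e20).
have {}near_gap : \forall z \near y, forall i : 'I_N.+1, `|g i y - g i z| < e / 2.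
  by apply: filter_forall => i; exact: near_gap.
apply: filterS near_gap => z gapz; apply: eU.
have e2e : e / 2 < e by rewrite ltr_pdivrMr // ltr_pMr // ltr1n.
apply: le_lt_trans e2e.
apply: weighted_sup_dist_le => k; have [kN|Nk] := leqP k N.
  have /= gapk := gapz (@Ordinal N.+1 k kN).
  exact: le_trans (weighted_gap_le k y z) (ltW gapk).
apply: le_trans (ltW Ne); apply: le_trans (ler_wpM2r _ (gap_le1 k y z)) _.
  by rewrite invr_ge0.
by rewrite mul1r lef_pV2 ?posrE // ler_nat ltnW.
Qed.

Lemma metrizable_of_separating_seq : metrizable L.
Proof.
exists weighted_sup_dist; split; first exact: weighted_sup_dist_metric.
move=> U _; split.
  move=> [V [oV ->]] y [Vy _]; have [e e0 eV] := open_weighted_sup_dist_ball oV Vy.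
  by exists e => // z _ /eV.
move=> Uball; exists U; split; last by rewrite setIT.
by apply: weighted_sup_dist_ball_open => y /Uball[e e0 eU]; exists e => // z; exact: eU.
Qed.

End SeparatingSequence.

Lemma compact_urysohn (L : topologicalType) (A B : set L) :
  hausdorff_space L -> compact [set: L] -> closed A -> closed B ->
  A `&` B = set0 ->
  exists u : L -> R, [/\ continuous u, forall y, 0 <= u y <= 1,
    forall y, A y -> u y = 0 & forall y, B y -> u y = 1].
Proof.
move=> hL cL cA cB AB0.
have sepAB : uniform_separator A B.
  exact: (@normal_separatorP R L).1 (compact_normal hL cL) A B cA cB AB0.
have [u [cu u01 u0 u1]] := (@uniform_separatorP L R A B).1 sepAB.
exists u; split => // y; last by move=> By; apply: u1; exists y.
  by have := u01 (u y) (ex_intro2 _ _ y I erefl); rewrite /= in_itv.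
by move=> Ay; apply: u0; exists y.
Qed.

Definition closed_network (L : topologicalType) (N : set (set L)) (M : set L) :=
  (forall A, N A -> closed A) /\
  forall y U, M y -> open U -> U y -> exists2 A, N A & A y /\ A `<=` U.

Lemma metrizable_of_countable_closed_network (L : topologicalType)
    (N : set (set L)) :
  hausdorff_space L -> compact [set: L] -> countable N ->
  closed_network N [set: L] -> metrizable L.
Proof.
move=> hL cL cN [closedN netN].
have /choice[u uP] : forall AB : set L * set L, exists u : L -> R,
    [/\ continuous u, forall y, 0 <= u y <= 1 &
      closed AB.1 -> closed AB.2 -> AB.1 `&` AB.2 = set0 ->
      (forall y, AB.1 y -> u y = 0) /\ (forall y, AB.2 y -> u y = 1)].
  move=> [A B] /=.
  have [[cA [cB AB0]]|nAB] := pselect (closed A /\ closed B /\ A `&` B = set0).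
    by have [u [? ? ? ?]] := compact_urysohn hL cL cA cB AB0; exists u.
  exists (fun _ => 0); split => [|y|cA cB AB0]; first exact: cst_continuous.
    by rewrite lexx ler01.
  by case: nAB.
have [e Ne] := countable_sub_range (set0, set0) (countableX cN cN).
apply: (@metrizable_of_separating_seq L (fun k => u (e k))) => //.
- by move=> k; have [] := uP (e k).
- by move=> k y; have [_ u01 _] := uP (e k); exact: u01.
move=> y z yz; have := hL; rewrite open_hausdorff => /(_ y z).
case; first exact/eqP.
move=> [U V] /= [/set_mem Uy /set_mem Vz] [oU oV /eqP UV0].
have [A NA [Ay AU]] := netN y U I oU Uy.
have [B NB [Bz BV]] := netN z V I oV Vz.
have [k _ ekAB] := Ne (A, B) (conj NA NB).
have AB0 : A `&` B = set0.
  by apply/seteqP; split => // x [/AU Ux /BV Vx]; rewrite -UV0.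
have [_ _ sepAB] := uP (e k); rewrite ekAB in sepAB.
have [u0 u1] := sepAB (closedN A NA) (closedN B NB) AB0.
by exists k; rewrite ekAB u0 // u1 // eq_sym oner_eq0.
Qed.

Lemma metric_closed_ball_network (K : topologicalType) (M S : set K)
    (rho : K -> K -> R) :
  is_metric_on M rho -> metric_topology_on M rho -> closed M ->
  S `<=` M -> M `<=` closure S ->
  closed_network
    [set M `&` [set x | rho p.1 x <= p.2.+1%:R^-1] | p in S `*` [set: nat]] M.
Proof.
move=> mM tM closedM SM MS; have [_ [rhoE [rhoC rhoT]]] := mM.
split.
  by move=> _ [[s m] [Ss _] <-]; apply: closed_metric_closed_ball => //; exact: SM.
move=> x U Mx oU Ux; have [e e0 eU] := open_metric_ball tM oU Ux Mx.
have e20 : 0 < e / 2 by rewrite divr_gt0.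
have [m me] := exists_invS_lt e20.
have [V [oV VE]] := metric_ball_open mM tM (m.+1%:R^-1) Mx.
have Vx : V x.
  have : [set y | M y /\ rho x y < m.+1%:R^-1] x.
    by split => //; rewrite (rhoE x x Mx Mx).2 // invr_gt0 ltr0n.
  by rewrite VE => -[].
have [s [Ss Vs]] := MS x Mx V (open_nbhs_nbhs (conj oV Vx)).
have Ms := SM s Ss.
have rho_xs : rho x s < m.+1%:R^-1.
  by have : (V `&` M) s by []; rewrite -VE => -[].
exists (M `&` [set y | rho s y <= m.+1%:R^-1]); first by exists (s, m).
split; first by split => //; rewrite /= rhoC // ltW.
move=> y [My rho_sy]; apply: eU => //.
apply: le_lt_trans (rhoT x s y Mx Ms My) _; rewrite [X in _ < X](splitr e).
by apply: ltrD; [exact: lt_trans rho_xs me | exact: le_lt_trans rho_sy me].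
Qed.

Lemma closed_network_image (K L : topologicalType) (f : K -> L)
    (N : set (set K)) (M : set K) :
  compact [set: K] -> hausdorff_space L -> continuous f ->
  (forall y, exists2 x, M x & f x = y) -> closed_network N M ->
  closed_network [set f @` A | A in N] [set: L].
Proof.
move=> cK hL cf fM [closedN netN]; split.
  by move=> _ [A NA <-]; exact: closed_image_closed (closedN A NA).
move=> y U _ oU Uy; have [x Mx fx] := fM y.
have ofU : open (f @^-1` U) by apply: open_comp => // ? _; exact: cf.
have [|A NA [Ax AU]] := netN x _ Mx ofU; first by rewrite /preimage /= fx.
exists (f @` A); first by exists A.
by split; [exists x | move=> _ [x' /AU fUx' <-]].
Qed.

Lemma separable_image_closed_lift (K L : topologicalType) (f : K -> L) :
  compact [set: K] -> hausdorff_space L -> continuous f ->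
  (forall y, exists x, f x = y) -> separable L ->
  exists M : set K, [/\ closed M, separable_on M & forall y, exists2 x, M x & f x = y].
Proof.
move=> cK hL cf onto [D [cD dD]]; have /choice[s sK] := onto.
exists (closure (s @` D)); split; first exact: closed_closure.
  exists (s @` D); split; first exact: subset_closure.
  by split => //; exact: sub_countable (card_image_le _ _) cD.
have closed_img : closed (f @` closure (s @` D)).
  by apply: closed_image_closed => //; exact: closed_closure.
have D_img : D `<=` f @` closure (s @` D).
  by move=> y Dy; exists (s y) => //; apply: subset_closure; exists y.
move=> y; apply: contrapT => nFy.
have [w [nFw Dw]] := dD _ (ex_intro _ y nFy) (closed_openC closed_img).
exact/nFw/D_img.
Qed.

Lemma aleph0_monolithic_separable_image_metrizable (K L : topologicalType) :
  compact_space K -> aleph0_monolithic K -> continuous_image K L ->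
  separable L -> metrizable L.
Proof.
move=> [_ cK] monoK [hL [f [cf onto]]] sepL.
have [M [closedM sepM fM]] := separable_image_closed_lift cK hL cf onto sepL.
have [rho [mM tM]] := monoK M sepM.
have [S [SM [cS MS]]] := sepM.
apply: (metrizable_of_countable_closed_network hL
  (continuous_onto_compact cK cf onto) _
  (closed_network_image cK hL cf fM (metric_closed_ball_network mM tM closedM SM MS))).
apply: sub_countable (card_image_le _ _) _.
apply: sub_countable (card_image_le _ _) _.
by apply: countableX => //; exact: countableP.
Qed.

Theorem proposition3p11 :
  (forall K : topologicalType, compact_space K ->
     (forall L : topologicalType, continuous_image K L ->
        separable L -> metrizable L) ->
     (forall L : topologicalType, continuous_image K L ->
        exists D : set L, dense D /\ metrizable_on D) ->
     forall L : topologicalType, continuous_image K L -> ccc L -> metrizable L)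
  /\
  (forall K : topologicalType, compact_space K ->
     aleph0_monolithic K -> fragmentable K ->
     forall L : topologicalType, continuous_image K L -> ccc L -> metrizable L).
Proof.
split.
  move=> K _ separable_metrizable dense_metrizable L imL cccL.
  apply: separable_metrizable => //.
  have [D [dD mD]] := dense_metrizable L imL.
  exact: ccc_dense_metrizable_separable cccL dD mD.
move=> K cK monoK fragK L imL cccL.
have sepL := fragmentable_ccc_image_separable cK fragK imL cccL.
exact: aleph0_monolithic_separable_image_metrizable cK monoK imL sepL.
Qed.
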